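(* Let $\bar f:[-1,0]\to\mathbb R$ be continuous with $0<\bar f(x)<1/2$ for all $x\in[-1,0]$, and let $b=\sqrt{1-2\bar f(-1)}\in(0,1)$. Let $\bar T$ be a solution of $(1-x^2)\frac{d\bar T}{dx}+\bar T^2=-2(1-x^2)+(1-2\bar f(x))$, continuous at $x=-1$ with $\bar T(-1)=b$. Then $\bar T$ can be extended as a solution to the whole interval $[-1,0]$, and $\bar T(0)<0$. *)

From Stdlib Require Import Reals.
From Coquelicot Require Import Coquelicot.
Open Scope R_scope.


Definition cont_on_closed (f : R -> R) (a b : R) : Prop :=
  forall x, a <= x <= b ->
    filterlim f (within (fun y => a <= y <= b) (locally x)) (locally (f x)).

Definition ode_at (fbar T : R -> R) (x : R) : Prop :=
  ex_derive T x /\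
  (1 - x ^ 2) * Derive T x + (T x) ^ 2 = -2 * (1 - x ^ 2) + (1 - 2 * fbar x).

From Stdlib Require Import Reals Lra.
From Coquelicot Require Import Coquelicot.
Open Scope R_scope.

(* The solution is trapped between two barriers: the upper barrier [-x], which solves the
   equation for [fbar = 0], and the lower barrier [be + (1 - x^2) / (x - be)], which solves it
   with [1 - 2 fbar] replaced by a constant [be^2 < 1 - 2 fbar] chosen with [be < T(-1)].
   Since the equation is singular at [x = -1], the extension is started at a point [a > -1]
   where [T] already lies strictly between the barriers. Between them the solution is bounded,
   so it is the solution (obtained by Picard iteration, unique by a Gronwall-type estimate) of
   the equation truncated at that bound, continued up to [0]; there [T(0) < -0 = 0]. *)

Lemma continuous_R_epsilon (f : R -> R) (x : R) :
  continuous f x <-> (forall eps, 0 < eps -> exists d, 0 < d /\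
     forall y, Rabs (y - x) < d -> Rabs (f y - f x) < eps).
Proof.
  unfold continuous; rewrite <- continuity_pt_filterlim.
  unfold continuity_pt, continue_in, limit1_in, limit_in; simpl; unfold R_dist.
  split; intros H eps He; destruct (H eps He) as [d [Hd Hy]]; exists d; split; auto.
  - intros y Hy'; destruct (Req_dec y x) as [->|Hne].
    + rewrite Rminus_eq_0, Rabs_R0; auto.
    + apply Hy; repeat split; auto.
  - intros y [_ Hy']; auto.
Qed.

Lemma continuous_R_of_ex_derive (f : R -> R) (x : R) : ex_derive f x -> continuous f x.
Proof. exact (ex_derive_continuous (K := R_AbsRing) (V := R_NormedModule) f x). Qed.

Lemma continuous_locally_lt (f : R -> R) (x y : R) :
  continuous f x -> f x < y -> locally x (fun t => f t < y).
Proof. intros Hc Hlt; exact (Hc _ (open_lt y (f x) Hlt)). Qed.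

Lemma continuous_locally_gt (f : R -> R) (x y : R) :
  continuous f x -> y < f x -> locally x (fun t => y < f t).
Proof. intros Hc Hlt; exact (Hc _ (open_gt y (f x) Hlt)). Qed.

Lemma lipschitz_continuous (g : R -> R) (k x : R) : 0 <= k ->
  (forall y z, Rabs (g y - g z) <= k * Rabs (y - z)) -> continuous g x.
Proof.
  intros Hk Hl; apply continuous_R_epsilon; intros eps He.
  exists (eps / (k + 1)); split; [apply Rdiv_lt_0_compat; lra|].
  intros y Hy; apply Rle_lt_trans with ((k + 1) * Rabs (y - x)).
  - specialize (Hl y x); pose proof (Rabs_pos (y - x)); nra.
  - apply Rlt_le_trans with ((k + 1) * (eps / (k + 1))).
    + apply Rmult_lt_compat_l; lra.
    + right; field; lra.
Qed.

Definition clamp (lo hi x : R) : R := Rmax lo (Rmin hi x).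

Lemma clamp_in (lo hi x : R) : lo <= hi -> lo <= clamp lo hi x <= hi.
Proof. intros; unfold clamp, Rmax, Rmin; repeat destruct Rle_dec; lra. Qed.

Lemma clamp_id (lo hi x : R) : lo <= x <= hi -> clamp lo hi x = x.
Proof. intros; unfold clamp, Rmax, Rmin; repeat destruct Rle_dec; lra. Qed.

Lemma clamp_lipschitz (lo hi x y : R) : lo <= hi ->
  Rabs (clamp lo hi x - clamp lo hi y) <= Rabs (x - y).
Proof.
  intros; unfold clamp, Rmax, Rmin; repeat destruct Rle_dec;
    unfold Rabs; repeat destruct Rcase_abs; lra.
Qed.

Lemma continuous_clamp (lo hi x : R) : lo <= hi -> continuous (clamp lo hi) x.
Proof.
  intros H; apply (lipschitz_continuous _ 1); [lra|].
  intros; rewrite Rmult_1_l; apply clamp_lipschitz; auto.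
Qed.

Lemma cont_on_closed_clamp (f : R -> R) (lo hi x : R) :
  lo <= hi -> cont_on_closed f lo hi -> continuous (fun t => f (clamp lo hi t)) x.
Proof.
  intros Hlh Hf; apply continuous_R_epsilon; intros eps He.
  destruct (proj1 (filterlim_locally _ _) (Hf _ (clamp_in lo hi x Hlh))
              (mkposreal eps He)) as [d Hd].
  exists d; split; [apply cond_pos|]; intros y Hy.
  apply (Hd (clamp lo hi y)); [|apply clamp_in; auto].
  exact (Rle_lt_trans _ _ _ (clamp_lipschitz lo hi y x Hlh) Hy).
Qed.

Lemma cont_on_closed_of_at_right (f : R -> R) (lo hi : R) :
  filterlim f (at_right lo) (locally (f lo)) ->
  (forall x, lo < x <= hi -> continuous f x) -> cont_on_closed f lo hi.
Proof.
  intros Hlo Hc x Hx; destruct (Req_dec x lo) as [->|Hne].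
  - apply filterlim_locally; intros eps.
    destruct (proj1 (filterlim_locally _ _) Hlo eps) as [d Hd].
    exists d; intros y Hy [Hy1 _]; destruct (Req_dec y lo) as [->|Hyne].
    + apply ball_center.
    + apply Hd; auto; lra.
  - apply (filterlim_filter_le_1 (F := locally x)); [apply filter_le_within|apply Hc; lra].
Qed.

Lemma bounded_on_segment (g : R -> R) (a b : R) : a <= b ->
  (forall t, a <= t <= b -> continuous g t) ->
  exists M, forall t, a <= t <= b -> Rabs (g t) <= M.
Proof.
  intros Hab Hc.
  destruct (continuity_ab_maj (fun t => Rabs (g t)) a b Hab) as [m [Hm _]].
  - intros t Ht; apply continuity_pt_filterlim.
    apply (continuous_comp g Rabs); [apply Hc; auto|apply continuous_Rabs].
  - exists (Rabs (g m)); auto.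
Qed.

Lemma is_derive_neg_left_pos (h : R -> R) (s d : R) :
  is_derive h s d -> d < 0 -> h s = 0 ->
  exists del, 0 < del /\ forall t, s - del < t < s -> 0 < h t.
Proof.
  intros Hder Hd Hs; apply is_derive_Reals in Hder.
  destruct (Hder (- d / 2) ltac:(lra)) as [[del Hdel] Hq].
  exists del; split; auto; intros t Ht.
  assert (Hk : t - s <> 0) by lra.
  assert (Hkd : Rabs (t - s) < del) by (rewrite Rabs_left; lra).
  specialize (Hq (t - s) Hk Hkd); simpl in Hq.
  replace (s + (t - s)) with t in Hq by ring; rewrite Hs, Rminus_0_r in Hq.
  apply Rabs_def2 in Hq; destruct Hq as [Hq _].
  assert (Hneg : h t / (t - s) < 0) by lra.
  assert (Hmul : h t / (t - s) * (t - s) = h t) by (field; lra).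
  nra.
Qed.

Lemma stays_negative (h : R -> R) (a b : R) :
  (forall x, a <= x <= b -> continuous h x) -> h a < 0 ->
  (forall x, a < x <= b -> h x = 0 -> exists d, is_derive h x d /\ d < 0) ->
  forall x, a <= x <= b -> h x < 0.
Proof.
  (* At the supremum [s] of the points up to which [h] stays negative, [h s >= 0]; then [h]
     is positive just left of [s], by continuity if [h s > 0] and by the derivative if not. *)
  intros Hc Ha Hd x1 Hx1; apply Rnot_le_lt; intros Hx1pos.
  set (E := fun x => a <= x <= x1 /\ forall t, a <= t <= x -> h t < 0).
  assert (HEa : E a) by (split; [lra|intros t Ht; replace t with a by lra; auto]).
  destruct (completeness E) as [s [Hub Hlub]].
  { exists x1; intros y [Hy _]; lra. }
  { exists a; auto. }
  assert (Has : a <= s) by (apply Hub; auto).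
  assert (Hsx : s <= x1) by (apply Hlub; intros y [Hy _]; lra).
  assert (Hbelow : forall t, a <= t < s -> h t < 0).
  { intros t Ht; apply Rnot_le_lt; intros Hn.
    assert (s <= t); [|lra].
    apply Hlub; intros y [Hy1 Hy2].
    apply Rnot_lt_le; intros Hyt; specialize (Hy2 t ltac:(lra)); lra. }
  assert (Hs : 0 <= h s).
  { apply Rnot_lt_le; intros Hs.
    destruct (continuous_locally_lt h s 0 (Hc s ltac:(lra)) Hs) as [[d Hd0] Hnear].
    assert (Hsx1 : s < x1) by (destruct (Req_dec s x1) as [<-|]; lra).
    set (s' := Rmin (s + d / 2) x1).
    assert (Es' : E s').
    { split; [unfold s', Rmin; destruct Rle_dec; lra|].
      intros t Ht; destruct (Rlt_or_le t s); [apply Hbelow; lra|].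
      apply Hnear; change (Rabs (t - s) < d).
      unfold s', Rmin in Ht; destruct Rle_dec in Ht; rewrite Rabs_right; lra. }
    specialize (Hub s' Es'); unfold s', Rmin in Hub; destruct Rle_dec in Hub; lra. }
  assert (Has' : a < s) by (destruct (Req_dec a s) as [<-|]; lra).
  assert (Hleft : exists del, 0 < del /\ forall t, s - del < t < s -> 0 < h t).
  { destruct (Rle_lt_or_eq_dec _ _ Hs) as [Hpos|Hz].
    - destruct (continuous_locally_gt h s 0 (Hc s ltac:(lra)) Hpos) as [[d Hd0] Hnear].
      exists d; split; auto; intros t Ht; apply Hnear; change (Rabs (t - s) < d).
      rewrite Rabs_left; lra.
    - destruct (Hd s ltac:(lra) (eq_sym Hz)) as [d [Hder Hdneg]].
      exact (is_derive_neg_left_pos h s d Hder Hdneg (eq_sym Hz)). }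
  destruct Hleft as [del [Hdel Hpos]].
  set (t := Rmax a (s - del / 2)).
  assert (Ht : a <= t < s /\ s - del < t) by (unfold t, Rmax; destruct Rle_dec; lra).
  specialize (Hpos t ltac:(lra)); specialize (Hbelow t ltac:(lra)); lra.
Qed.

Lemma geometric_small (K eps : R) : 0 < eps ->
  exists N, forall n, (N <= n)%nat -> K * (/ 2) ^ n < eps.
Proof.
  intros He.
  assert (Hlim : is_lim_seq (fun n => K * (/ 2) ^ n) 0).
  { replace (Finite 0) with (Rbar_mult K 0) by (simpl; f_equal; ring).
    apply is_lim_seq_scal_l, is_lim_seq_geom; rewrite Rabs_right; lra. }
  apply is_lim_seq_spec in Hlim; destruct (Hlim (mkposreal eps He)) as [N HN].
  exists N; intros n Hn; specialize (HN n Hn); simpl in HN.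
  rewrite Rminus_0_r in HN; apply Rabs_def2 in HN; lra.
Qed.

Lemma zero_of_geometric_bound (z K : R) : (forall n, Rabs z <= K * (/ 2) ^ n) -> z = 0.
Proof.
  intros H; destruct (Req_dec z 0) as [|Hz]; auto.
  destruct (geometric_small K (Rabs z) (Rabs_pos_lt z Hz)) as [N HN].
  specialize (HN N (le_n N)); specialize (H N); lra.
Qed.

Lemma continuous_geometric_limit (u : nat -> R -> R) (P : R -> R) (K t : R) :
  (forall n, continuous (u n) t) -> (forall n x, Rabs (P x - u n x) <= K * (/ 2) ^ n) ->
  continuous P t.
Proof.
  intros Hu Htail; apply continuous_R_epsilon; intros eps He.
  destruct (geometric_small K (eps / 3) ltac:(lra)) as [N HN]; specialize (HN N (le_n N)).
  destruct (proj1 (continuous_R_epsilon _ t) (Hu N) (eps / 3) ltac:(lra)) as [d [Hd Hdd]].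
  exists d; split; auto; intros y Hy.
  replace (P y - P t) with ((P y - u N y) + (u N y - u N t) + - (P t - u N t)) by ring.
  pose proof (Htail N y); pose proof (Htail N t); pose proof (Hdd y Hy).
  pose proof (Rabs_triang (P y - u N y + (u N y - u N t)) (- (P t - u N t))).
  pose proof (Rabs_triang (P y - u N y) (u N y - u N t)).
  rewrite Rabs_Ropp in *; lra.
Qed.

Lemma ex_RInt_R (g : R -> R) (a z : R) : (forall t, continuous g t) -> ex_RInt g a z.
Proof. intros H; apply (ex_RInt_continuous (V := R_CompleteNormedModule)); auto. Qed.

Lemma is_derive_RInt_R (g : R -> R) (a x : R) : (forall t, continuous g t) ->
  is_derive (fun z => RInt g a z) x (g x).
Proof.
  intros H; apply (is_derive_RInt (V := R_CompleteNormedModule) g _ a); auto.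
  apply filter_forall; intros z; apply RInt_correct, ex_RInt_R; auto.
Qed.

Lemma abs_RInt_minus_le (g1 g2 h : R -> R) (a z : R) : a <= z ->
  (forall t, continuous g1 t) -> (forall t, continuous g2 t) -> (forall t, continuous h t) ->
  (forall s, a <= s <= z -> Rabs (g1 s - g2 s) <= h s) ->
  Rabs (RInt g1 a z - RInt g2 a z) <= RInt h a z.
Proof.
  intros Haz H1 H2 H3 Hb.
  assert (Hdiff : forall t, continuous (fun s => g1 s - g2 s) t)
    by (intros t; apply (continuous_minus g1 g2); auto).
  rewrite <- (RInt_minus g1 g2) by (apply ex_RInt_R; auto).
  eapply Rle_trans; [apply abs_RInt_le; auto; apply ex_RInt_R; auto|].
  apply RInt_le; auto; try (apply ex_RInt_R; auto).
  - intros t; apply (continuous_comp _ Rabs); [apply Hdiff|apply continuous_Rabs].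
  - intros; apply Hb; lra.
Qed.

Lemma RInt_exp_affine (C k a z : R) : 0 < k ->
  RInt (fun s => C * exp (k * (s - a))) a z = C * (exp (k * (z - a)) - 1) / k.
Proof.
  intros Hk; apply is_RInt_unique.
  replace (C * (exp (k * (z - a)) - 1) / k)
    with (minus (C / k * exp (k * (z - a))) (C / k * exp (k * (a - a))))
    by (unfold minus, plus, opp; simpl; rewrite Rminus_diag, Rmult_0_r, exp_0; field; lra).
  apply (is_RInt_derive (V := R_CompleteNormedModule) (fun s => C / k * exp (k * (s - a)))).
  - intros x _; auto_derive; auto.
    replace (x + - a) with (x - a) by ring; field; lra.
  - intros x _; apply continuous_R_of_ex_derive; auto_derive; auto.
Qed.

(** * Picard iteration *)

Section Picard.

Variables (F : R -> R -> R) (a b y0 L : R).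
Hypothesis a_lt_b : a < b.
Hypothesis L_pos : 0 < L.
Hypothesis F_cont : forall y t, continuous (fun s => F s y) t.
Hypothesis F_lipschitz : forall t y z, Rabs (F t y - F t z) <= L * Rabs (y - z).

Lemma continuous_F_comp (u : R -> R) :
  (forall t, continuous u t) -> forall t, continuous (fun s => F s (u s)) t.
Proof.
  intros Hu t; apply continuous_R_epsilon; intros eps He.
  destruct (proj1 (continuous_R_epsilon _ t) (Hu t) (eps / (2 * L)))
    as [d1 [Hd1 H1]]; [apply Rdiv_lt_0_compat; lra|].
  destruct (proj1 (continuous_R_epsilon _ t) (F_cont (u t) t) (eps / 2))
    as [d2 [Hd2 H2]]; [lra|].
  exists (Rmin d1 d2); split; [apply Rmin_pos; auto|]; intros s Hs.
  assert (Hs1 : Rabs (s - t) < d1) by (eapply Rlt_le_trans; [exact Hs|apply Rmin_l]).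
  assert (Hs2 : Rabs (s - t) < d2) by (eapply Rlt_le_trans; [exact Hs|apply Rmin_r]).
  specialize (H1 s Hs1); specialize (H2 s Hs2); pose proof (F_lipschitz s (u s) (u t)).
  assert (L * Rabs (u s - u t) <= eps / 2).
  { apply Rle_trans with (L * (eps / (2 * L))); [nra|right; field; lra]. }
  replace (F s (u s) - F t (u t)) with ((F s (u s) - F s (u t)) + (F s (u t) - F t (u t)))
    by ring.
  pose proof (Rabs_triang (F s (u s) - F s (u t)) (F s (u t) - F t (u t))); lra.
Qed.

(* Iterates are evaluated at [clamp a b x], so they are defined and continuous on all of [R]. *)
Fixpoint picard (n : nat) : R -> R :=
  match n with
  | O => fun _ => y0
  | S k => fun x => y0 + RInt (fun s => F s (picard k s)) a (clamp a b x)
  end.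

Lemma continuous_picard (n : nat) (t : R) : continuous (picard n) t.
Proof.
  revert t; induction n as [|n IH]; intros t; simpl; [apply continuous_const|].
  apply (continuous_plus (fun _ => y0)); [apply continuous_const|].
  apply (continuous_comp (clamp a b) (fun x => RInt (fun s => F s (picard n s)) a x)).
  - apply continuous_clamp; lra.
  - apply continuous_R_of_ex_derive; eexists.
    apply is_derive_RInt_R, continuous_F_comp; auto.
Qed.

Section Bounds.

Variable M : R.
Hypothesis F_y0_bound : forall t, a <= t <= b -> Rabs (F t y0) <= M.

Let M_nonneg : 0 <= M.
Proof. specialize (F_y0_bound a ltac:(lra)); pose proof (Rabs_pos (F a y0)); lra. Qed.

Let step_coef_nonneg (n : nat) : 0 <= (b - a) * M * (/ 2) ^ n.
Proof. pose proof (pow_le (/ 2) n ltac:(lra)); apply Rmult_le_pos; nra. Qed.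

(* The weight [exp (2 L (x - a))] makes each Picard step contract by a factor [1/2]. *)
Lemma picard_step_bound (n : nat) (x : R) :
  Rabs (picard (S n) x - picard n x)
  <= (b - a) * M * (/ 2) ^ n * exp (2 * L * (clamp a b x - a)).
Proof.
  revert x; induction n as [|n IH]; intros x; pose proof (clamp_in a b x ltac:(lra)) as Hx.
  - simpl; rewrite Rplus_minus_l.
    assert (1 <= exp (2 * L * (clamp a b x - a)))
      by (pose proof (exp_ineq1_le (2 * L * (clamp a b x - a))); nra).
    eapply Rle_trans; [apply abs_RInt_le_const; [lra| |intros; apply F_y0_bound; lra]|].
    + apply ex_RInt_R, (continuous_F_comp (fun _ => y0)); intros; apply continuous_const.
    + pose proof (step_coef_nonneg 0); simpl in *; nra.
  - set (w := fun s => L * (b - a) * M * (/ 2) ^ n * exp (2 * L * (s - a))).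
    change (picard (S (S n)) x) with (y0 + RInt (fun s => F s (picard (S n) s)) a (clamp a b x)).
    change (picard (S n) x) with (y0 + RInt (fun s => F s (picard n s)) a (clamp a b x)).
    rewrite (Rplus_comm y0 (RInt _ _ _)), (Rplus_comm y0 (RInt _ _ _)), Rminus_plus_r_r.
    eapply Rle_trans; [apply (abs_RInt_minus_le _ _ w); [lra| | | |]|].
    + apply continuous_F_comp, continuous_picard.
    + apply continuous_F_comp, continuous_picard.
    + intros t; apply continuous_R_of_ex_derive; unfold w; auto_derive; auto.
    + intros s Hs; eapply Rle_trans; [apply F_lipschitz|].
      specialize (IH s); rewrite clamp_id in IH by lra.
      unfold w; replace (L * (b - a) * M * (/ 2) ^ n * exp (2 * L * (s - a)))
        with (L * ((b - a) * M * (/ 2) ^ n * exp (2 * L * (s - a)))) by ring.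
      apply Rmult_le_compat_l; lra.
    + unfold w; rewrite RInt_exp_affine by lra.
      pose proof (exp_pos (2 * L * (clamp a b x - a))); pose proof (step_coef_nonneg n).
      simpl; apply Rle_trans with ((b - a) * M * (/ 2) ^ n * / 2
                                    * (exp (2 * L * (clamp a b x - a)) - 1)).
      * right; field; lra.
      * nra.
Qed.

Let C := 2 * ((b - a) * M * exp (2 * L * (b - a))).

Lemma picard_cauchy (n m : nat) (x : R) : (n <= m)%nat ->
  Rabs (picard m x - picard n x) <= C * (/ 2) ^ n - C * (/ 2) ^ m.
Proof.
  intros Hnm; induction Hnm as [|m Hnm IH].
  - rewrite !Rminus_diag, Rabs_R0; lra.
  - replace (picard (S m) x - picard n x)
      with ((picard (S m) x - picard m x) + (picard m x - picard n x)) by ring.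
    eapply Rle_trans; [apply Rabs_triang|].
    enough (Rabs (picard (S m) x - picard m x) <= C / 2 * (/ 2) ^ m)
      by (replace (C * (/ 2) ^ S m) with (C / 2 * (/ 2) ^ m) by (simpl; field); lra).
    eapply Rle_trans; [apply picard_step_bound|].
    pose proof (clamp_in a b x ltac:(lra)).
    assert (exp (2 * L * (clamp a b x - a)) <= exp (2 * L * (b - a))).
    { destruct (Req_dec (clamp a b x) b) as [->|]; [lra|].
      left; apply exp_increasing; nra. }
    unfold C; apply Rle_trans with ((b - a) * M * (/ 2) ^ m * exp (2 * L * (b - a)));
      [apply Rmult_le_compat_l; auto|right; field].
Qed.

Let tail_coef_nonneg (n : nat) : 0 <= C * (/ 2) ^ n.
Proof.
  unfold C; pose proof (exp_pos (2 * L * (b - a))); pose proof (pow_le (/ 2) n ltac:(lra)).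
  assert (0 <= (b - a) * M) by (apply Rmult_le_pos; lra); apply Rmult_le_pos; nra.
Qed.

Lemma picard_limit_exists : exists P : R -> R,
  forall n x, Rabs (P x - picard n x) <= C * (/ 2) ^ n.
Proof.
  exists (fun x => real (Lim_seq (fun n => picard n x))); intros n x.
  pose proof tail_coef_nonneg as Hpow.
  assert (Hcv : ex_finite_lim_seq (fun m => picard m x)).
  { apply ex_lim_seq_cauchy_corr; intros eps.
    destruct (geometric_small C eps (cond_pos eps)) as [N HN]; exists N; intros p q Hp Hq.
    destruct (Nat.le_ge_cases p q) as [Hpq|Hqp].
    - rewrite Rabs_minus_sym; pose proof (picard_cauchy p q x Hpq).
      pose proof (HN p Hp); pose proof (Hpow q); lra.
    - pose proof (picard_cauchy q p x Hqp); pose proof (HN q Hq); pose proof (Hpow p); lra. }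
  destruct Hcv as [l Hl]; rewrite (is_lim_seq_unique _ _ Hl); simpl.
  change (Rbar_le (Rabs (l - picard n x)) (C * (/ 2) ^ n)).
  apply (is_lim_seq_le_loc (fun m => Rabs (picard m x - picard n x)) (fun _ => C * (/ 2) ^ n)).
  - exists n; intros m Hm; pose proof (picard_cauchy n m x Hm); pose proof (Hpow m); lra.
  - apply (is_lim_seq_abs _ (l - picard n x)), is_lim_seq_minus'; auto.
    apply is_lim_seq_const.
  - apply is_lim_seq_const.
Qed.

Lemma picard_limit_fixpoint (P : R -> R) :
  (forall n x, Rabs (P x - picard n x) <= C * (/ 2) ^ n) ->
  forall x, P x = y0 + RInt (fun s => F s (P s)) a (clamp a b x).
Proof.
  intros Htail x; apply Rminus_diag_uniq.
  assert (HPc : forall t, continuous P t) by (intros t; exact (continuous_geometric_limit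
    _ P _ t (fun n => continuous_picard n t) Htail)).
  pose proof (clamp_in a b x ltac:(lra)) as Hx.
  apply (zero_of_geometric_bound _ (C + (b - a) * (L * C))); intros n.
  assert (Hint : Rabs (RInt (fun s => F s (picard n s)) a (clamp a b x)
                       - RInt (fun s => F s (P s)) a (clamp a b x))
                 <= (b - a) * (L * (C * (/ 2) ^ n))).
  { rewrite <- (RInt_minus (V := R_CompleteNormedModule))
      by (apply ex_RInt_R, continuous_F_comp; auto; apply continuous_picard).
    eapply Rle_trans; [apply (abs_RInt_le_const _ _ _ (L * (C * (/ 2) ^ n))); [lra| |]|].
    - apply (ex_RInt_minus (V := R_CompleteNormedModule));
        apply ex_RInt_R, continuous_F_comp; auto; apply continuous_picard.
    - intros s _; eapply Rle_trans; [apply F_lipschitz|].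
      apply Rmult_le_compat_l; [lra|]; rewrite Rabs_minus_sym; apply Htail.
    - apply Rmult_le_compat_r; [|lra].
      apply Rmult_le_pos; [lra|apply tail_coef_nonneg]. }
  pose proof (Htail (S n) x) as Hnext; simpl in Hnext.
  change (picard (S n) x) with (y0 + RInt (fun s => F s (picard n s)) a (clamp a b x)) in Hnext.
  pose proof (tail_coef_nonneg n).
  set (I1 := RInt (fun s => F s (picard n s)) a (clamp a b x)) in *.
  set (I2 := RInt (fun s => F s (P s)) a (clamp a b x)) in *.
  replace (P x - (y0 + I2)) with ((P x - (y0 + I1)) + (I1 - I2)) by ring.
  eapply Rle_trans; [apply Rabs_triang|]; nra.
Qed.

End Bounds.

Theorem picard_lindelof : exists P : R -> R,
  (forall t, continuous P t) /\ P a = y0 /\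
  (forall t, a < t < b -> is_derive P t (F t (P t))).
Proof.
  destruct (bounded_on_segment (fun t => F t y0) a b) as [M HM]; [lra| |].
  { intros t _; apply (continuous_F_comp (fun _ => y0)); intros; apply continuous_const. }
  destruct (picard_limit_exists M HM) as [P Htail].
  assert (HPc : forall t, continuous P t) by (intros t; exact (continuous_geometric_limit
    _ P _ t (fun n => continuous_picard n t) Htail)).
  pose proof (picard_limit_fixpoint M HM P Htail) as Hfix.
  exists P; split; [auto|split].
  - rewrite Hfix, clamp_id, RInt_point by lra; apply Rplus_0_r.
  - intros t Ht; apply (is_derive_ext_loc (fun x => y0 + RInt (fun s => F s (P s)) a x)).
    + assert (Hd : 0 < Rmin (t - a) (b - t)) by (apply Rmin_pos; lra).
      exists (mkposreal _ Hd).
      intros y Hy; change (Rabs (y - t) < Rmin (t - a) (b - t)) in Hy.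
      rewrite Hfix, (clamp_id a b y); [reflexivity|].
      unfold Rmin in Hy; destruct Rle_dec in Hy; apply Rabs_def2 in Hy; lra.
    + pose proof (is_derive_plus (fun _ => y0) _ t zero _ (is_derive_const y0 t)
        (is_derive_RInt_R _ a t (continuous_F_comp P HPc))) as Hder.
      rewrite plus_zero_l in Hder; exact Hder.
Qed.

End Picard.

(* The weighted energy [(P - Q)^2 exp (-2 L s)] is nonincreasing and vanishes at [a]. *)
Lemma ode_uniqueness (G : R -> R -> R) (P Q : R -> R) (a x L : R) :
  a <= x -> P a = Q a ->
  (forall s, a <= s <= x -> continuous P s /\ continuous Q s) ->
  (forall s, a < s < x -> is_derive P s (G s (P s)) /\ is_derive Q s (G s (Q s))) ->
  (forall s, a <= s <= x -> Rabs (G s (P s) - G s (Q s)) <= L * Rabs (P s - Q s)) ->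
  P x = Q x.
Proof.
  intros Hax Ha Hc Hd Hlip.
  set (E := fun s => (P s - Q s) ^ 2 * exp (- (2 * L) * s)).
  set (dE := fun s => 2 * (P s - Q s) * (G s (P s) - G s (Q s)) * exp (- (2 * L) * s)
                      - 2 * L * (P s - Q s) ^ 2 * exp (- (2 * L) * s)).
  destruct (MVT_gen E a x dE) as [xi [Hxi Hmvt]];
    rewrite ?Rmin_left, ?Rmax_right in * by lra.
  - intros s Hs; destruct (Hd s Hs) as [HP HQ].
    unfold E, dE; auto_derive; [repeat split; eexists; eauto|].
    replace (Derive (fun y => P y) s) with (G s (P s)) by (symmetry; apply is_derive_unique, HP).
    replace (Derive (fun y => Q y) s) with (G s (Q s)) by (symmetry; apply is_derive_unique, HQ).
    ring.
  - intros s Hs; destruct (Hc s Hs) as [HP HQ]; apply continuity_pt_filterlim; unfold E.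
    apply (continuous_mult (fun y => (P y - Q y) ^ 2) (fun y => exp (- (2 * L) * y))).
    + apply (continuous_comp (fun y => P y - Q y) (fun w => w ^ 2)).
      * apply (continuous_minus P Q); auto.
      * apply continuous_R_of_ex_derive; auto_derive; auto.
    + apply continuous_R_of_ex_derive; auto_derive; auto.
  - assert (HdE : dE xi <= 0).
    { unfold dE; specialize (Hlip xi Hxi).
      set (w := P xi - Q xi) in *; set (g := G xi (P xi) - G xi (Q xi)) in *.
      pose proof (exp_pos (- (2 * L) * xi)).
      assert (w * g <= L * w ^ 2).
      { apply Rle_trans with (Rabs w * Rabs g); [rewrite <- Rabs_mult; apply Rle_abs|].
        rewrite <- (pow2_abs w); pose proof (Rabs_pos w); nra. }
      nra. }
    assert (HE : E x <= 0) by (unfold E in *; rewrite Ha, Rminus_diag in Hmvt; simpl in Hmvt; nra).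
    unfold E in HE; pose proof (exp_pos (- (2 * L) * x)).
    assert ((P x - Q x) ^ 2 <= 0) by nra; nra.
Qed.

(** * The Riccati equation *)

Definition riccati_rhs (f : R -> R) (x y : R) : R :=
  -2 + (1 - 2 * f x - y ^ 2) / (1 - x ^ 2).

Lemma ode_at_iff (f T : R -> R) (x : R) : 1 - x ^ 2 <> 0 ->
  ode_at f T x <-> is_derive T x (riccati_rhs f x (T x)).
Proof.
  intros Hx; unfold ode_at, riccati_rhs; split.
  - intros [[l Hl] Heq]; rewrite (is_derive_unique _ _ _ Hl) in Heq.
    replace (-2 + (1 - 2 * f x - T x ^ 2) / (1 - x ^ 2)) with l; auto.
    apply (Rmult_eq_reg_l (1 - x ^ 2)); auto; field_simplify; auto; lra.
  - intros Hd; split; [eexists; eauto|].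
    rewrite (is_derive_unique _ _ _ Hd); field; auto.
Qed.

Lemma ode_at_ext_loc (f T S : R -> R) (x : R) :
  locally x (fun y => T y = S y) -> ode_at f T x -> ode_at f S x.
Proof.
  intros Hloc [[l Hl] Heq]; split.
  - exists l; exact (is_derive_ext_loc _ _ _ _ Hloc Hl).
  - rewrite <- (Derive_ext_loc _ _ _ Hloc), <- (locally_singleton _ _ Hloc); auto.
Qed.

Lemma riccati_rhs_ext (f g : R -> R) (x y : R) : f x = g x ->
  riccati_rhs f x y = riccati_rhs g x y.
Proof. intros H; unfold riccati_rhs; rewrite H; reflexivity. Qed.

Lemma riccati_rhs_lipschitz (f : R -> R) (s y z M d : R) :
  0 < d -> d <= 1 - s ^ 2 -> Rabs y <= M -> Rabs z <= M ->
  Rabs (riccati_rhs f s y - riccati_rhs f s z) <= 2 * M / d * Rabs (y - z).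
Proof.
  intros Hd Hs Hy Hz; unfold riccati_rhs.
  replace (-2 + (1 - 2 * f s - y ^ 2) / (1 - s ^ 2) - (-2 + (1 - 2 * f s - z ^ 2) / (1 - s ^ 2)))
    with ((y - z) * (- (y + z)) / (1 - s ^ 2)) by (field; lra).
  unfold Rdiv; rewrite !Rabs_mult, Rabs_Ropp, (Rabs_right (/ _))
    by (apply Rle_ge, Rlt_le, Rinv_0_lt_compat; lra).
  assert (Hyz : Rabs (y + z) <= 2 * M) by (pose proof (Rabs_triang y z); lra).
  assert (Hinv : / (1 - s ^ 2) <= / d) by (apply Rinv_le_contravar; lra).
  pose proof (Rabs_pos (y - z)); pose proof (Rabs_pos (y + z)).
  pose proof (Rinv_0_lt_compat (1 - s ^ 2) ltac:(lra)).
  apply Rle_trans with (Rabs (y - z) * (2 * M) * / d); [|right; ring].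
  apply Rmult_le_compat; nra.
Qed.

Lemma continuous_riccati_rhs (f : R -> R) (y s : R) :
  (forall t, continuous f t) -> 1 - s ^ 2 <> 0 -> continuous (fun t => riccati_rhs f t y) s.
Proof.
  intros Hf Hs; unfold riccati_rhs.
  apply (continuous_plus (fun _ => -2)); [apply continuous_const|].
  apply (continuous_mult (fun t => 1 - 2 * f t - y ^ 2) (fun t => / (1 - t ^ 2))).
  - apply (continuous_minus (fun t => 1 - 2 * f t) (fun _ => y ^ 2)); [|apply continuous_const].
    apply (continuous_minus (fun _ => 1) (fun t => 2 * f t)); [apply continuous_const|].
    apply (continuous_scal_r 2 f); auto.
  - apply continuous_Rinv_comp; auto.
    apply continuous_R_of_ex_derive; auto_derive; auto.
Qed.

Lemma one_minus_sq_ge (a b s : R) : a <= s <= b -> Rmin (1 - a ^ 2) (1 - b ^ 2) <= 1 - s ^ 2.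
Proof.
  intros Hs; destruct (Rle_or_lt s 0).
  - apply Rle_trans with (1 - a ^ 2); [apply Rmin_l|nra].
  - apply Rle_trans with (1 - b ^ 2); [apply Rmin_r|nra].
Qed.

(* Truncating in [x] and [y] makes the right-hand side globally Lipschitz, so Picard applies. *)
Lemma riccati_truncated_solution (f : R -> R) (a b K y0 : R) :
  -1 < a < b -> b < 1 -> 0 < K -> (forall t, continuous f t) ->
  exists P : R -> R, (forall t, continuous P t) /\ P a = y0 /\
    (forall x, a < x < b -> Rabs (P x) <= K -> is_derive P x (riccati_rhs f x (P x))).
Proof.
  intros Hab Hb HK Hf.
  set (d := Rmin (1 - a ^ 2) (1 - b ^ 2)).
  assert (Hd : 0 < d) by (apply Rmin_pos; nra).
  assert (Hdx : forall t, d <= 1 - clamp a b t ^ 2)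
    by (intros t; apply one_minus_sq_ge, clamp_in; lra).
  assert (HclK : forall y, Rabs (clamp (-K) K y) <= K)
    by (intros y; apply Rabs_le, clamp_in; lra).
  destruct (picard_lindelof (fun t y => riccati_rhs f (clamp a b t) (clamp (-K) K y))
              a b y0 (2 * K / d)) as [P [HPc [HPa HPd]]].
  - lra.
  - apply Rdiv_lt_0_compat; lra.
  - intros y t.
    apply (continuous_comp (clamp a b) (fun s => riccati_rhs f s (clamp (-K) K y))).
    + apply continuous_clamp; lra.
    + apply continuous_riccati_rhs; auto; specialize (Hdx t); lra.
  - intros t y z; eapply Rle_trans; [apply riccati_rhs_lipschitz; eauto|].
    apply Rmult_le_compat_l; [apply Rdiv_le_0_compat; lra|apply clamp_lipschitz; lra].
  - exists P; split; [exact HPc|split; [exact HPa|intros x Hx HPx]].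
    replace (riccati_rhs f x (P x)) with (riccati_rhs f (clamp a b x) (clamp (-K) K (P x)));
      [apply HPd; auto|].
    rewrite (clamp_id a b x), (clamp_id (-K) K (P x)); auto; [apply Rabs_le_between|]; lra.
Qed.

Lemma riccati_uniqueness (f P Q : R -> R) (a x : R) :
  -1 < a <= x -> x < 1 -> P a = Q a ->
  (forall s, a <= s <= x -> continuous P s /\ continuous Q s) ->
  (forall s, a < s < x ->
     is_derive P s (riccati_rhs f s (P s)) /\ is_derive Q s (riccati_rhs f s (Q s))) ->
  P x = Q x.
Proof.
  intros Hax Hx Ha Hc Hd.
  destruct (bounded_on_segment P a x) as [MP HMP]; [lra|intros; apply Hc; auto|].
  destruct (bounded_on_segment Q a x) as [MQ HMQ]; [lra|intros; apply Hc; auto|].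
  set (d := Rmin (1 - a ^ 2) (1 - x ^ 2)).
  apply (ode_uniqueness (riccati_rhs f) P Q a x (2 * Rmax MP MQ / d)); try tauto.
  intros s Hs; apply riccati_rhs_lipschitz.
  - apply Rmin_pos; nra.
  - apply one_minus_sq_ge; auto.
  - eapply Rle_trans; [apply HMP; auto|apply Rmax_l].
  - eapply Rle_trans; [apply HMQ; auto|apply Rmax_r].
Qed.

Definition lower_barrier (be x : R) : R := be + (1 - x ^ 2) / (x - be).

Lemma is_derive_lower_barrier (be x : R) : x <> be -> 1 - x ^ 2 <> 0 ->
  is_derive (lower_barrier be) x (-2 + (be ^ 2 - lower_barrier be x ^ 2) / (1 - x ^ 2)).
Proof.
  intros Hxb Hx; unfold lower_barrier; auto_derive.
  - replace (x + - be) with (x - be) by ring; lra.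
  - replace (x + - be) with (x - be) by ring; field; split; lra.
Qed.

Lemma lower_barrier_lt_neg (be x : R) : -1 < be < 1 -> x < be -> lower_barrier be x < - x.
Proof.
  intros Hb Hx.
  replace (lower_barrier be x) with (- x - (1 - be ^ 2) / (be - x))
    by (unfold lower_barrier; field; lra).
  assert (0 < (1 - be ^ 2) / (be - x)); [apply Rdiv_lt_0_compat; nra|lra].
Qed.

Lemma lower_barrier_bounds (be x : R) : 0 < be -> -1 <= x <= 0 ->
  - / be <= lower_barrier be x <= be.
Proof.
  intros Hb Hx; unfold lower_barrier.
  replace ((1 - x ^ 2) / (x - be)) with (- ((1 - x ^ 2) / (be - x))) by (field; lra).
  assert (0 <= (1 - x ^ 2) / (be - x)) by (apply Rdiv_le_0_compat; nra).
  assert ((1 - x ^ 2) / (be - x) <= / be); [|lra].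
  apply Rle_trans with (1 / (be - x)).
  - apply Rmult_le_compat_r; [left; apply Rinv_0_lt_compat|]; nra.
  - unfold Rdiv; rewrite Rmult_1_l; apply Rinv_le_contravar; lra.
Qed.

Lemma riccati_barrier (f Y : R -> R) (be a z : R) :
  0 < be < 1 -> -1 < a <= z -> z < be ->
  (forall x, a < x <= z -> 0 < f x /\ be ^ 2 < 1 - 2 * f x) ->
  (forall x, a <= x <= z -> continuous Y x) ->
  lower_barrier be a < Y a < - a ->
  (forall x, a < x <= z -> lower_barrier be x <= Y x <= - x ->
     is_derive Y x (riccati_rhs f x (Y x))) ->
  forall x, a <= x <= z -> lower_barrier be x < Y x < - x.
Proof.
  intros Hbe Haz Hzb Hf HYc [HYa HYa'] HYd x Hx.
  assert (Hsq : forall w, a <= w <= z -> 0 < 1 - w ^ 2) by (intros; nra).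
  split.
  - enough (lower_barrier be x - Y x < 0) by lra.
    apply (stays_negative (fun w => lower_barrier be w - Y w) a z); [|lra| |lra].
    + intros w Hw; apply (continuous_minus (lower_barrier be) Y); [|auto].
      apply continuous_R_of_ex_derive; eexists.
      apply is_derive_lower_barrier; [|specialize (Hsq w Hw)]; lra.
    + intros w Hw Hzero; specialize (Hsq w ltac:(lra)); destruct (Hf w Hw) as [_ Hfw].
      assert (HYw : Y w = lower_barrier be w) by lra.
      pose proof (lower_barrier_lt_neg be w ltac:(lra) ltac:(lra)).
      eexists; split.
      * apply (is_derive_minus (lower_barrier be) Y);
          [apply is_derive_lower_barrier; lra|apply HYd; lra].
      * change (minus ?u ?v < 0) with (u - v < 0); unfold riccati_rhs; rewrite HYw.
        replace (-2 + (be ^ 2 - lower_barrier be w ^ 2) / (1 - w ^ 2)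
                 - (-2 + (1 - 2 * f w - lower_barrier be w ^ 2) / (1 - w ^ 2)))
          with ((be ^ 2 - (1 - 2 * f w)) / (1 - w ^ 2)) by (field; lra).
        pose proof (Rinv_0_lt_compat _ Hsq); unfold Rdiv; nra.
  - enough (Y x + x < 0) by lra.
    apply (stays_negative (fun w => Y w + w) a z); [|lra| |lra].
    + intros w Hw; apply (continuous_plus Y (fun w => w)); [auto|apply continuous_id].
    + intros w Hw Hzero; specialize (Hsq w ltac:(lra)); destruct (Hf w Hw) as [Hfw _].
      assert (HYw : Y w = - w) by lra.
      pose proof (lower_barrier_lt_neg be w ltac:(lra) ltac:(lra)).
      eexists; split.
      * apply (is_derive_plus Y (fun w => w));
          [apply HYd; lra|apply (is_derive_id (K := R_AbsRing))].
      * change (plus ?u one < 0) with (u + 1 < 0); unfold riccati_rhs; rewrite HYw.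
        replace (-2 + (1 - 2 * f w - (- w) ^ 2) / (1 - w ^ 2) + 1)
          with (- (2 * f w) / (1 - w ^ 2)) by (field; lra).
        pose proof (Rinv_0_lt_compat _ Hsq); unfold Rdiv; nra.
Qed.

Lemma riccati_trapped_solution (f : R -> R) (be a y0 : R) :
  0 < be < 1 -> -1 < a <= 0 -> (forall t, continuous f t) ->
  (forall x, a < x <= 0 -> 0 < f x /\ be ^ 2 < 1 - 2 * f x) ->
  lower_barrier be a < y0 < - a ->
  exists P : R -> R, (forall t, continuous P t) /\ P a = y0 /\
    (forall x, a < x <= 0 -> is_derive P x (riccati_rhs f x (P x))) /\ P 0 < 0.
Proof.
  intros Hbe Ha Hfc Hf Hy0.
  assert (Hbe1 : 1 < / be) by (rewrite <- Rinv_1; apply Rinv_lt_contravar; lra).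
  destruct (riccati_truncated_solution f a (1 / 2) (/ be) y0) as [P [HPc [HPa HPd]]];
    [lra|lra|lra|auto|].
  assert (HPK : forall x, lower_barrier be x <= P x <= - x -> a <= x <= 0 -> Rabs (P x) <= / be).
  { intros x HPx Hx; pose proof (lower_barrier_bounds be x ltac:(lra) ltac:(lra)).
    apply Rabs_le; lra. }
  assert (Hbar : forall x, a <= x <= 0 -> lower_barrier be x < P x < - x).
  { apply (riccati_barrier f P be a 0); auto; try lra.
    intros x Hx HPx; apply HPd, HPK; lra. }
  exists P; split; [auto|split; [auto|split]].
  - intros x Hx; apply HPd, HPK; [lra| |lra]; pose proof (Hbar x ltac:(lra)); lra.
  - pose proof (Hbar 0 ltac:(lra)); lra.
Qed.

Lemma exists_barrier_slope (f : R -> R) (lo hi x0 : R) :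
  lo <= x0 <= hi -> cont_on_closed f lo hi -> (forall x, lo <= x <= hi -> f x < 1 / 2) ->
  exists be, 0 < be < sqrt (1 - 2 * f x0) /\
    (forall x, lo <= x <= hi -> be ^ 2 < 1 - 2 * f x).
Proof.
  intros Hx0 Hf Hf2.
  destruct (continuity_ab_maj (fun x => f (clamp lo hi x)) lo hi) as [xM [HxM HxMr]]; [lra| |].
  { intros x _; apply continuity_pt_filterlim, cont_on_closed_clamp; auto; lra. }
  assert (Hmax : forall x, lo <= x <= hi -> f x <= f xM).
  { intros x Hx; specialize (HxM x Hx); rewrite !clamp_id in HxM; auto. }
  set (m := 1 - 2 * f xM).
  assert (Hm : 0 < m) by (specialize (Hf2 xM HxMr); unfold m; lra).
  pose proof (sqrt_lt_R0 m Hm) as Hsq0; pose proof (sqrt_sqrt m (Rlt_le _ _ Hm)) as Hsq.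
  exists (sqrt m / 2); split; [split; [lra|]|].
  - apply Rlt_le_trans with (sqrt m); [lra|].
    apply sqrt_le_1_alt; specialize (Hmax x0 Hx0); unfold m; lra.
  - intros x Hx; specialize (Hmax x Hx); unfold m in *; nra.
Qed.

Lemma exists_start_point (T : R -> R) (be c : R) :
  -1 < c -> 0 < be < T (-1) -> T (-1) < 1 ->
  filterlim T (at_right (-1)) (locally (T (-1))) ->
  exists a, -1 < a < c /\ lower_barrier be a < T a < - a.
Proof.
  intros Hc Hbe HT1 HT.
  set (m := Rmin c (- (1 + T (-1)) / 2)).
  assert (Hm : -1 < m /\ m <= c /\ m <= - (1 + T (-1)) / 2)
    by (split; [apply Rmin_glb_lt; lra|split; [apply Rmin_l|apply Rmin_r]]).
  assert (Heps : 0 < Rmin (T (-1) - be) ((1 - T (-1)) / 2)) by (apply Rmin_pos; lra).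
  assert (Hnear : at_right (-1) (fun y => -1 < y < m)).
  { assert (Hr : 0 < m + 1) by lra; exists (mkposreal _ Hr); intros y Hy Hgt; split; auto.
    change (Rabs (y - -1) < m + 1) in Hy; apply Rabs_def2 in Hy; lra. }
  destruct (filter_ex _ (filter_and _ _ Hnear (HT _ (locally_ball _ (mkposreal _ Heps)))))
    as [a [Ha HTa]].
  change (Rabs (T a - T (-1)) < Rmin (T (-1) - be) ((1 - T (-1)) / 2)) in HTa.
  pose proof (Rmin_l (T (-1) - be) ((1 - T (-1)) / 2)).
  pose proof (Rmin_r (T (-1) - be) ((1 - T (-1)) / 2)).
  pose proof (lower_barrier_bounds be a ltac:(lra) ltac:(lra)).
  apply Rabs_def2 in HTa; exists a; repeat split; lra.
Qed.

Definition paste (a : R) (T P : R -> R) (x : R) : R := if Rlt_dec x a then T x else P x.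

Lemma paste_solution (f T P : R -> R) (lo a c hi : R) :
  lo < a < c ->
  (forall x, lo < x < c -> ode_at f T x) -> filterlim T (at_right lo) (locally (T lo)) ->
  (forall t, continuous P t) -> (forall x, a < x < hi -> ode_at f P x) ->
  (forall x, a <= x < c -> P x = T x) ->
  (forall x, x < c -> paste a T P x = T x) /\ cont_on_closed (paste a T P) lo hi /\
  (forall x, lo < x < hi -> ode_at f (paste a T P) x).
Proof.
  intros Hac HTode HT HPc HPode HPT.
  assert (Hleft : forall x, x < c -> paste a T P x = T x).
  { intros x Hx; unfold paste; destruct Rlt_dec; auto; apply HPT; lra. }
  assert (HlocT : forall x, x < c -> locally x (fun y => T y = paste a T P y)).
  { intros x Hx; assert (Hr : 0 < c - x) by lra; exists (mkposreal _ Hr); intros y Hy.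
    change (Rabs (y - x) < c - x) in Hy; apply Rabs_def2 in Hy; rewrite Hleft; auto; lra. }
  assert (HlocP : forall x, a < x -> locally x (fun y => P y = paste a T P y)).
  { intros x Hx; assert (Hr : 0 < x - a) by lra; exists (mkposreal _ Hr); intros y Hy.
    change (Rabs (y - x) < x - a) in Hy; apply Rabs_def2 in Hy.
    unfold paste; destruct Rlt_dec; auto; lra. }
  split; [exact Hleft|split].
  - apply cont_on_closed_of_at_right.
    + rewrite Hleft by lra; apply (filterlim_ext_loc T); auto.
      apply (filter_le_within (F := locally lo)), HlocT; lra.
    + intros x Hx; destruct (Rlt_or_le x c).
      * apply (continuous_ext_loc _ T); [apply HlocT; auto|].
        apply continuous_R_of_ex_derive, HTode; lra.
      * apply (continuous_ext_loc _ P); auto; apply HlocP; lra.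
  - intros x Hx; destruct (Rlt_or_le x c).
    + apply (ode_at_ext_loc f T); [apply HlocT|apply HTode]; lra.
    + apply (ode_at_ext_loc f P); [apply HlocP|apply HPode]; lra.
Qed.

Theorem proposition7 (fbar T : R -> R) (c : R) :
  cont_on_closed fbar (-1) 0 ->
  (forall x, -1 <= x <= 0 -> 0 < fbar x < 1 / 2) ->
  -1 < c <= 0 ->
  (forall x, -1 < x < c -> ode_at fbar T x) ->
  filterlim T (at_right (-1)) (locally (T (-1))) ->
  T (-1) = sqrt (1 - 2 * fbar (-1)) ->
  exists S : R -> R,
    (forall x, -1 <= x < c -> S x = T x) /\
    cont_on_closed S (-1) 0 /\
    (forall x, -1 < x < 0 -> ode_at fbar S x) /\
    S 0 < 0.
Proof.
  intros Hf Hfb Hc Hode HT Hb.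
  destruct (exists_barrier_slope fbar (-1) 0 (-1)) as [be [Hbe Hbef]];
    [lra|auto|intros x Hx; apply Hfb; auto|].
  assert (HT1 : T (-1) < 1).
  { rewrite Hb; apply Rlt_le_trans with (sqrt 1); [|rewrite sqrt_1; lra].
    apply sqrt_lt_1_alt; specialize (Hfb (-1) ltac:(lra)); lra. }
  destruct (exists_start_point T be c) as [a [Ha HTa]]; [lra|lra|auto|auto|].
  set (ft := fun x => fbar (clamp (-1) 0 x)).
  assert (Hft : forall x, -1 <= x <= 0 -> ft x = fbar x)
    by (intros x Hx; unfold ft; rewrite clamp_id; auto).
  destruct (riccati_trapped_solution ft be a (T a)) as [P [HPc [HPa [HPd HP0]]]];
    [lra|lra|intros; apply cont_on_closed_clamp; auto; lra| |lra|].
  { intros x Hx; rewrite Hft by lra; split; [apply Hfb|apply Hbef]; lra. }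
  assert (HPode : forall x, a < x <= 0 -> is_derive P x (riccati_rhs fbar x (P x)))
    by (intros x Hx; rewrite <- (riccati_rhs_ext ft) by (apply Hft; lra); auto).
  destruct (paste_solution fbar T P (-1) a c 0) as [Hleft [Hcont HSode]]; auto; try lra.
  - intros x Hx; apply (ode_at_iff fbar P x ltac:(apply Rgt_not_eq; nra)), HPode; lra.
  - intros x Hx; apply (riccati_uniqueness fbar P T a x); auto; try lra.
    + intros s Hs; split; auto; apply continuous_R_of_ex_derive, Hode; lra.
    + intros s Hs; split; [apply HPode; lra|].
      apply (ode_at_iff fbar T s ltac:(apply Rgt_not_eq; nra)), Hode; lra.
  - exists (paste a T P); split; [intros x Hx; apply Hleft; lra|split; [auto|split; [auto|]]].
    unfold paste; destruct Rlt_dec; [lra|auto].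
Qed.
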